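(* Let $\mathbf u:[0,T]\to(0,\infty)^N$ be a differentiable solution of the geometric flux-differencing scheme $\frac{d\mathbf u}{dt}+2WD\mathbf w=\mathbf 0$, where $w_i=\sqrt{a_iu_i}$, $W=\operatorname{diag}(\mathbf w)$, and let $\mathbf v:[0,T]\to\mathbb R^N$ solve the linearized equation $$\frac{d\mathbf v}{dt}+\operatorname{diag}(D\mathbf w)AW^{-1}\mathbf v+WDAW^{-1}\mathbf v=\mathbf 0,$$ with $\mathbf w=\mathbf w(t)$ built from $\mathbf u(t)$. Then $\mathbf z:=W^{-1}\mathbf v$ satisfies $\frac{d\mathbf z}{dt}+DA\mathbf z=\mathbf 0$, the quantity $\sum_iH_{ii}v_i^2/u_i$ is constant in time, and $$\|\mathbf v(t)\|_H^2\le\frac{\max_iu_i(t)}{\min_iu_i(0)}\,\|\mathbf v(0)\|_H^2\qquad\text{for all }t\in[0,T].$$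
   Context: $H=\operatorname{diag}(H_{ii})$, $H_{ii}>0$; $Q\in\mathbb R^{N\times N}$ with $Q+Q^T=0$; $D=H^{-1}Q$; $\mathbf a$ constant in time with $a_i>0$, $A=\operatorname{diag}(\mathbf a)$; $\|\mathbf v\|_H^2=\sum_iH_{ii}v_i^2$. *)

From HB Require Import structures.
From mathcomp Require Import all_boot all_order all_algebra.
From mathcomp Require Import all_classical all_reals all_analysis.
Set Implicit Arguments. Unset Strict Implicit. Unset Printing Implicit Defensive.
Import Order.TTheory GRing.Theory Num.Theory.
Local Open Scope ring_scope.

(* D = H^{-1} Q with H = diag(Hd) *)
Definition Dmat (R : realType) (N : nat) (Hd : 'I_N -> R) (Q : 'M[R]_N) : 'M[R]_N :=
  \matrix_(i, j) (Q i j / Hd i).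

Definition mv (R : realType) (N : nat) (M : 'M[R]_N) (x : 'I_N -> R) : 'I_N -> R :=
  fun i => \sum_(j < N) M i j * x j.

Definition Hnorm2 (R : realType) (N : nat) (Hd : 'I_N -> R) (x : 'I_N -> R) : R :=
  \sum_(i < N) Hd i * x i ^+ 2.

(* max_i x_i (N >= 1; value 0 when N = 0) *)
Definition vmax (R : realType) (N : nat) (x : 'I_N -> R) : R :=
  \big[Num.max/0]_(i < N) x i.
(* min_i x_i (default element vmax x is >= every x_i, so this is the true min
   for N >= 1) *)
Definition vmin (R : realType) (N : nat) (x : 'I_N -> R) : R :=
  \big[Num.min/vmax x]_(i < N) x i.

(* With w = sqrt(A u) the substitution z = W^-1 v turns the linearised
   equation into the linear flow z' = - D A z: differentiating w_i gives
   w_i' = - a_i (D w)_i, which exactly cancels the first term of the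
   linearised equation.  Since D = H^-1 Q with Q skew, D is skew-adjoint for
   the H inner product, so the weighted energy sum_i H_ii a_i z_i^2 is
   conserved; it equals sum_i H_ii v_i^2 / u_i because w_i^2 = a_i u_i.
   Comparing this quantity with ||v||_H^2 at times t and 0 gives the bound. *)
From HB Require Import structures.
From mathcomp Require Import all_boot all_order all_algebra.
From mathcomp Require Import all_classical all_reals all_analysis.
From mathcomp Require Import ring lra.
Set Implicit Arguments. Unset Strict Implicit. Unset Printing Implicit Defensive.
Import Order.TTheory GRing.Theory Num.Theory.
Local Open Scope ring_scope.
Local Open Scope classical_set_scope.

Section VectorExtrema.
Variables (R : realType) (N : nat).
Implicit Type x : 'I_N -> R.

Lemma vmax_ge x i : x i <= vmax x.
Proof. by rewrite /vmax (bigD1 i) //= le_max lexx. Qed.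

Lemma vmax_ge0 x : 0 <= vmax x.
Proof. by rewrite /vmax; elim/big_rec: _ => // i y _ hy; rewrite le_max hy orbT. Qed.

Lemma vmin_le x i : vmin x <= x i.
Proof. by rewrite /vmin (bigD1 i) //= ge_min lexx. Qed.

Lemma vmin_gt0 x : (forall i, 0 < x i) -> (0 < N)%N -> 0 < vmin x.
Proof.
move=> x_gt0 N_gt0; rewrite /vmin; elim/big_ind: _ => //=.
- exact: lt_le_trans (x_gt0 (Ordinal N_gt0)) (vmax_ge _ _).
- by move=> p q p_gt0 q_gt0; rewrite lt_min p_gt0.
Qed.

End VectorExtrema.

Section SkewAdjoint.
Variables (R : realType) (N : nat) (Hd : 'I_N -> R) (Q : 'M[R]_N).
Hypothesis Hd_neq0 : forall i, Hd i != 0.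
Hypothesis Q_skew : Q + Q^T = 0.

Lemma skew_quad_form0 (y : 'I_N -> R) :
  \sum_(i < N) \sum_(j < N) y i * Q i j * y j = 0.
Proof.
have Qji i j : Q j i = - Q i j.
  have /eqP := congr1 (fun M : 'M[R]_N => M i j) Q_skew.
  by rewrite !mxE addr_eq0 => /eqP ->; rewrite opprK.
set S := (X in X = 0); suff : S = - S by lra.
rewrite {1}/S exchange_big /= /S -sumrN; apply: eq_bigr => i _.
by rewrite -sumrN; apply: eq_bigr => j _; rewrite Qji; ring.
Qed.

Lemma Hdot_Dmat_skew (y : 'I_N -> R) :
  \sum_(i < N) Hd i * y i * mv (Dmat Hd Q) y i = 0.
Proof.
rewrite -[RHS](skew_quad_form0 y); apply: eq_bigr => i _.
rewrite /mv mulr_sumr; apply: eq_bigr => j _; rewrite mxE.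
by field; exact: Hd_neq0.
Qed.

End SkewAdjoint.

Section Derivatives.
Variable R : realType.

Lemma is_derive_derive1_addr_eq0 (f : R -> R) (t x : R) :
  derivable f t 1 -> derive1 f t + x = 0 -> is_derive t 1 f (- x).
Proof.
move=> /derivableP f' /eqP; rewrite addr_eq0 => /eqP <-.
by rewrite derive1E.
Qed.

Lemma is_derive0_itv_cst (G : R -> R) (T : R) :
  (forall t, t \in `[0, T] -> is_derive t 1 G 0) ->
  forall t s : R, t \in `[0, T] -> s \in `[0, T] -> G t = G s.
Proof.
move=> G'0 t s; wlog ts : t s / t <= s.
  move=> wlog_ts tI sI; have [/wlog_ts|/ltW /wlog_ts] := leP t s; first exact.
  by move=> /(_ sI tI).
rewrite !inE /= !in_itv /= => /andP[t0 tT] /andP[s0 sT].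
have sub x : t <= x <= s -> x \in `[0, T].
  by case/andP=> tx xs; rewrite inE /= in_itv /= (le_trans t0 tx) (le_trans xs sT).
have G'0_in x : x \in `]t, s[%R -> is_derive x 1 G ((fun=> 0) x).
  by rewrite in_itv /= => /andP[tx xs]; apply/G'0/sub; rewrite !ltW.
have G_derivable : {in `[t, s]%R, forall x, derivable G x 1}.
  by move=> x; rewrite in_itv /= => /sub /G'0 [].
have [c _] := MVT_segment ts G'0_in (derivable_within_continuous G_derivable).
by rewrite mul0r => /eqP; rewrite subr_eq0 => /eqP.
Qed.

Lemma is_derive_inv_sqrt_mul (f g : R -> R) (c t d e : R) :
  let w := Num.sqrt (c * f t) in
  0 < c * f t ->
  is_derive t 1 f (- (2 * w * d)) ->
  is_derive t 1 g (- (d * c * w^-1 * g t + w * e)) ->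
  is_derive t 1 (fun s => (Num.sqrt (c * f s))^-1 * g s) (- e).
Proof.
move=> w cf_gt0 f' g'.
have w_neq0 : w != 0 by rewrite gt_eqF // sqrtr_gt0.
have w' : is_derive t 1 (fun s => Num.sqrt (c * f s))
                     ((2 * w)^-1 * (c * - (2 * w * d))).
  have cf' : is_derive t 1 (c \*: f) (c *: - (2 * w * d)) by exact: is_deriveZ.
  have cf_gt0' : 0 < (c \*: f) t by [].
  exact: is_derive1_comp (is_derive1_sqrt cf_gt0') cf'.
have w_inv' := @is_deriveV _ (fun s => Num.sqrt (c * f s)) t _ _ w_neq0 w'.
have z' := is_deriveM w_inv' g'.
apply: is_derive_eq z' _.
rewrite /GRing.scale /= -/w; field.
by rewrite w_neq0.
Qed.

End Derivatives.

Section ConservedEnergy.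
Variables (R : realType) (N : nat) (Hd : 'I_N -> R) (Q : 'M[R]_N) (a : 'I_N -> R).
Hypothesis Hd_neq0 : forall i, Hd i != 0.
Hypothesis Q_skew : Q + Q^T = 0.

Lemma is_derive_skew_flow_energy (z : R -> 'I_N -> R) (t : R) :
  (forall i, is_derive t 1 (fun s => z s i)
                       (- mv (Dmat Hd Q) (fun j => a j * z t j) i)) ->
  is_derive t 1 (fun s => \sum_(i < N) Hd i * a i * z s i ^+ 2) 0.
Proof.
move=> z'.
have E' := is_derive_sum (fun i => is_deriveZ (Hd i * a i) (is_deriveX 2 (z' i))).
have -> : (fun s => \sum_(i < N) Hd i * a i * z s i ^+ 2)
          = \sum_(i < N) (Hd i * a i) \*: (fun s => z s i) ^+ 2.
  by rewrite fct_sumE.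
apply: is_derive_eq E' _.
rewrite -[RHS](mulr0 (-2)).
rewrite -[X in _ * X](Hdot_Dmat_skew Hd_neq0 Q_skew (fun j => a j * z t j)).
rewrite mulr_sumr; apply: eq_bigr => i _.
by rewrite /GRing.scale /=; ring.
Qed.

End ConservedEnergy.

Section EnergyComparison.
Variables (R : realType) (N : nat) (Hd : 'I_N -> R).
Hypothesis Hd_ge0 : forall i, 0 <= Hd i.

Definition HUnorm2 (u v : 'I_N -> R) : R := \sum_(i < N) Hd i * v i ^+ 2 / u i.

Lemma HUnorm2_sqrt_scale (a u v : 'I_N -> R) :
  (forall i, 0 < a i) -> (forall i, 0 < u i) ->
  HUnorm2 u v = \sum_(i < N) Hd i * a i * ((Num.sqrt (a i * u i))^-1 * v i) ^+ 2.
Proof.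
move=> a_gt0 u_gt0; apply: eq_bigr => i _.
have au_gt0 : 0 < a i * u i by rewrite mulr_gt0.
rewrite exprMn exprVn sqr_sqrtr ?ltW //.
by field; rewrite !lt0r_neq0.
Qed.

Lemma Hnorm2_le_vmax_HUnorm2 (u v : 'I_N -> R) :
  (forall i, 0 < u i) -> Hnorm2 Hd v <= vmax u * HUnorm2 u v.
Proof.
move=> u_gt0; rewrite /Hnorm2 /HUnorm2 mulr_sumr; apply: ler_sum => i _.
rewrite -{1}(divfK (lt0r_neq0 (u_gt0 i)) (Hd i * v i ^+ 2)) [leRHS]mulrC.
apply: ler_wpM2l (vmax_ge _ _).
exact: divr_ge0 (mulr_ge0 (Hd_ge0 i) (sqr_ge0 _)) (ltW (u_gt0 i)).
Qed.

Lemma HUnorm2_le_Hnorm2_vmin (u v : 'I_N -> R) :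
  (forall i, 0 < u i) -> HUnorm2 u v <= Hnorm2 Hd v / vmin u.
Proof.
move=> u_gt0; rewrite /Hnorm2 /HUnorm2 mulr_suml; apply: ler_sum => i _.
have vmin_gt0 := vmin_gt0 u_gt0 (leq_ltn_trans (leq0n i) (ltn_ord i)).
apply: ler_wpM2l; first exact: mulr_ge0 (Hd_ge0 i) (sqr_ge0 _).
by rewrite lef_pV2 ?posrE ?vmin_le.
Qed.

Lemma Hnorm2_le_vmax_vmin (u v u0 v0 : 'I_N -> R) :
  (forall i, 0 < u i) -> (forall i, 0 < u0 i) -> HUnorm2 u v = HUnorm2 u0 v0 ->
  Hnorm2 Hd v <= vmax u / vmin u0 * Hnorm2 Hd v0.
Proof.
move=> u_gt0 u0_gt0 HUnorm2_eq.
apply: le_trans (Hnorm2_le_vmax_HUnorm2 _ u_gt0) _.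
rewrite HUnorm2_eq -mulrA [_^-1 * _]mulrC.
apply: ler_wpM2l; first exact: vmax_ge0.
exact: HUnorm2_le_Hnorm2_vmin.
Qed.

End EnergyComparison.

Theorem mainTheorem6 (R : realType) (N : nat) (T : R)
    (Hd : 'I_N -> R) (Q : 'M[R]_N) (a : 'I_N -> R)
    (u v : R -> 'I_N -> R) :
  (forall i, 0 < Hd i) ->
  Q + Q^T = 0 ->
  (forall i, 0 < a i) ->
  0 <= T ->
  (forall t, t \in `[0, T] -> forall i, 0 < u t i) ->
  (forall t, t \in `[0, T] -> forall i, derivable (fun s => u s i) t 1) ->
  (forall t, t \in `[0, T] -> forall i,
     derive1 (fun s => u s i) t
     + 2 * Num.sqrt (a i * u t i)
         * mv (Dmat Hd Q) (fun j => Num.sqrt (a j * u t j)) i = 0) ->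
  (forall t, t \in `[0, T] -> forall i, derivable (fun s => v s i) t 1) ->
  (forall t, t \in `[0, T] -> forall i,
     derive1 (fun s => v s i) t
     + mv (Dmat Hd Q) (fun j => Num.sqrt (a j * u t j)) i
         * a i * (Num.sqrt (a i * u t i))^-1 * v t i
     + Num.sqrt (a i * u t i)
         * mv (Dmat Hd Q)
              (fun j => a j * (Num.sqrt (a j * u t j))^-1 * v t j) i = 0) ->
  let z := fun t i => (Num.sqrt (a i * u t i))^-1 * v t i in
  (forall t, t \in `[0, T] -> forall i,
     derivable (fun s => z s i) t 1 /\
     derive1 (fun s => z s i) t + mv (Dmat Hd Q) (fun j => a j * z t j) i = 0) /\
  (forall t s, t \in `[0, T] -> s \in `[0, T] ->
     \sum_(i < N) Hd i * v t i ^+ 2 / u t i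
     = \sum_(i < N) Hd i * v s i ^+ 2 / u s i) /\
  (forall t, t \in `[0, T] ->
     Hnorm2 Hd (v t) <= vmax (u t) / vmin (u 0) * Hnorm2 Hd (v 0)).
Proof.
move=> Hd_gt0 Q_skew a_gt0 T_ge0 u_gt0 u_derivable u_eq v_derivable v_eq z.
have Hd_neq0 i : Hd i != 0 by rewrite lt0r_neq0.
have z' t : t \in `[0, T] -> forall i,
    is_derive t 1 (fun s => z s i) (- mv (Dmat Hd Q) (fun j => a j * z t j) i).
  move=> tI i; apply: is_derive_inv_sqrt_mul; first by rewrite mulr_gt0 ?u_gt0.
  - exact: is_derive_derive1_addr_eq0 (u_derivable t tI i) (u_eq t tI i).
  - have -> : (fun j => a j * z t j)
              = (fun j => a j * (Num.sqrt (a j * u t j))^-1 * v t j).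
      by apply/funext => j; rewrite mulrA.
    move: (v_eq t tI i); rewrite -addrA.
    exact: is_derive_derive1_addr_eq0 (v_derivable t tI i).
have HUnorm2_cst t s : t \in `[0, T] -> s \in `[0, T] ->
    HUnorm2 Hd (u t) (v t) = HUnorm2 Hd (u s) (v s).
  move=> tI sI.
  rewrite (HUnorm2_sqrt_scale Hd _ a_gt0 (u_gt0 _ tI)).
  rewrite (HUnorm2_sqrt_scale Hd _ a_gt0 (u_gt0 _ sI)).
  apply: (is_derive0_itv_cst (G := fun s => \sum_(i < N) Hd i * a i * z s i ^+ 2)
            _ tI sI) => x xI.
  by have := is_derive_skew_flow_energy Hd_neq0 Q_skew (z' x xI).
have zeroI : 0 \in `[0, T] by rewrite inE /= in_itv /= lexx T_ge0.
split; [|split].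
- move=> t tI i; split; first by case: (z' t tI i).
  by rewrite derive1E (@derive_val _ _ _ _ _ _ _ (z' t tI i)) addNr.
- exact: HUnorm2_cst.
- move=> t tI.
  apply: Hnorm2_le_vmax_vmin (u_gt0 t tI) (u_gt0 0 zeroI) (HUnorm2_cst t 0 tI zeroI).
  by move=> i; exact: ltW.
Qed.
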